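(* Let $(\mathfrak{g},[\cdot,\cdot],\langle\cdot,\cdot\rangle)$ be a quadratic Lie algebra with center $Z(\mathfrak{g})$. (1) If $H^2(\mathfrak{g})=\{0\}$ and $Z(\mathfrak{g})\neq\{0\}$, then $\mathfrak{g}$ admits no $k$-symplectic structure (for any $k\ge1$). (2) If $\dim Z(\mathfrak{g})=1$ and the restriction of $\langle\cdot,\cdot\rangle$ to $Z(\mathfrak{g})$ is nondegenerate, then every derivation $D$ of $\mathfrak{g}$ which is skew-symmetric with respect to $\langle\cdot,\cdot\rangle$ satisfies $D(Z(\mathfrak{g}))=0$. In particular $\mathfrak{g}$ admits no $k$-symplectic structure (for any $k\ge1$).
   Context: A quadratic Lie algebra is a finite-dimensional real Lie algebra $\mathfrak{g}$ endowed with a nondegenerate symmetric bilinear form $\langle\cdot,\cdot\rangle$ which is invariant: $\langle [u,v],w\rangle+\langle [u,w],v\rangle=0$ for all $u,v,w\in\mathfrak{g}$. $H^2(\mathfrak{g})$ denotes the second Chevalley–Eilenberg cohomology group of $\mathfrak{g}$ with trivial real coefficients. A $k$-symplectic structure on a real Lie algebra $\mathfrak{g}$ of dimension $n(k+1)$ ($n,k\ge1$) is a pair consisting of a Lie subalgebra $\mathfrak{h}\subset\mathfrak{g}$ of dimension $nk$ and a family $(\theta_1,\dots,\theta_k)$ of skew-symmetric bilinear forms on $\mathfrak{g}$ such that: (i) $\bigcap_{i=1}^k\ker\theta_i=\{0\}$, where $\ker\theta_i=\{u\in\mathfrak{g}:\theta_i(u,v)=0\ \forall v\in\mathfrak{g}\}$;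 (ii) each $\theta_i$ is a 2-cocycle: $\theta_i([u,v],w)+\theta_i([v,w],u)+\theta_i([w,u],v)=0$ for all $u,v,w$; (iii) $\theta_i(u,v)=0$ for all $u,v\in\mathfrak{h}$ and all $i$. $\mathfrak{g}$ admits a $k$-symplectic structure if such data exist (for the appropriate $n$). *)

From HB Require Import structures.
From mathcomp Require Import all_boot all_order all_algebra.
From mathcomp Require Export reals.
Set Implicit Arguments. Unset Strict Implicit. Unset Printing Implicit Defensive.
Import Order.TTheory GRing.Theory Num.Theory.
Local Open Scope ring_scope.

Section QuadLie.
Variables (R : realType) (V : vectType R).
Variable br : V -> V -> V.

Definition bilinear_map (f : V -> V -> V) :=
  (forall a x y z, f (a *: x + y) z = a *: f x z + f y z) /\
  (forall a x y z, f x (a *: y + z) = a *: f x y + f x z).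

Definition bilinear_form (f : V -> V -> R) :=
  (forall a x y z, f (a *: x + y) z = a * f x z + f y z) /\
  (forall a x y z, f x (a *: y + z) = a * f x y + f x z).

Definition linear_form (f : V -> R) := forall a x y, f (a *: x + y) = a * f x + f y.
Definition linear_endo (D : V -> V) := forall a x y, D (a *: x + y) = a *: D x + D y.

Definition lie_bracket :=
  [/\ bilinear_map br, (forall x, br x x = 0) &
      (forall x y z, br x (br y z) + br y (br z x) + br z (br x y) = 0)].

Definition quadratic (B : V -> V -> R) :=
  [/\ lie_bracket, bilinear_form B, (forall u v, B u v = B v u),
      (forall u, (forall v, B u v = 0) -> u = 0) &
      (forall u v w, B (br u v) w + B (br u w) v = 0)].

Definition central (u : V) := forall v, br u v = 0.

Definition skew_form (th : V -> V -> R) := forall u v, th u v = - th v u.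

Definition cocycle2 (th : V -> V -> R) :=
  forall u v w, th (br u v) w + th (br v w) u + th (br w u) v = 0.

(* H^2(g) = 0 : every 2-cocycle is a coboundary, th(u,v) = - f([u,v]) *)
Definition H2_trivial :=
  forall th, bilinear_form th -> skew_form th -> cocycle2 th ->
    exists f, linear_form f /\ forall u v, th u v = - f (br u v).

Definition subalgebra (h : {vspace V}) :=
  forall u v, u \in h -> v \in h -> br u v \in h.

Definition k_symplectic (k : nat) :=
  exists n : nat, (0 < n)%N /\ \dim {: V} = (n * k.+1)%N /\
  exists (h : {vspace V}) (th : 'I_k -> V -> V -> R),
    [/\ subalgebra h /\ \dim h = (n * k)%N,
        (forall i, bilinear_form (th i) /\ skew_form (th i)),
        (forall u, (forall i v, th i u v = 0) -> u = 0),
        (forall i, cocycle2 (th i)) &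
        (forall i u v, u \in h -> v \in h -> th i u v = 0)].

Definition derivation (D : V -> V) :=
  linear_endo D /\ forall u v, D (br u v) = br (D u) v + br u (D v).

Definition skew_wrt (B : V -> V -> R) (D : V -> V) :=
  forall u v, B (D u) v + B u (D v) = 0.

Definition center_dim1 :=
  exists z, z != 0 /\ forall u, central u <-> exists a : R, u = a *: z.

Definition nondeg_on_center (B : V -> V -> R) :=
  forall u, central u -> (forall v, central v -> B u v = 0) -> u = 0.

End QuadLie.

From HB Require Import structures.
From mathcomp Require Import all_boot all_order all_algebra.
Import GRing.Theory Num.Theory.
Set Implicit Arguments. Unset Strict Implicit. Unset Printing Implicit Defensive.
Local Open Scope ring_scope.

(* A nonzero vector lying in the radical of every 2-cocycle contradicts
   condition (i) of a k-symplectic structure. A central z is in every radical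
   when all cocycles are coboundaries, since theta(z, v) = -f([z, v]) = 0.
   When Z(g) = R z0 with <z0, z0> <> 0, write theta(z0, .) = <c, .>: the
   cocycle identity with z0 central makes c orthogonal to [g, g], so c is
   central by invariance and nondegeneracy, hence a multiple of z0, and
   theta(z0, z0) = 0 forces c = 0. Likewise a skew derivation D maps z0 to a
   central vector with <D z0, z0> = 0, hence to 0. *)

Lemma self_opp_eq0 (R : numDomainType) (x : R) : x = - x -> x = 0.
Proof. by move/eqP; rewrite -addr_eq0 -mulr2n mulrn_eq0 => /eqP. Qed.

Section LinearOfAxiom.
Variables (K : pzRingType) (U W : lmodType K) (f : U -> W).
Hypothesis f_lin : forall a x y, f (a *: x + y) = a *: f x + f y.

Let f_linear : {linear U -> W} := HB.pack f (GRing.isLinear.Build _ _ _ _ f f_lin).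

Lemma lin0 : f 0 = 0. Proof. exact: linear0 f_linear. Qed.
Lemma linZ a x : f (a *: x) = a *: f x. Proof. exact: (linearZZ f_linear a x). Qed.
Lemma linD x y : f (x + y) = f x + f y. Proof. exact: (linearD f_linear x y). Qed.

End LinearOfAxiom.

Lemma linfun_lin (K : fieldType) (U W : vectType K) (f : U -> W) :
  (forall a x y, f (a *: x + y) = a *: f x + f y) -> linfun f =1 f.
Proof. move=> f_lin; exact: lfunE (HB.pack f (GRing.isLinear.Build _ _ _ _ f f_lin)). Qed.

Section Riesz.
Variables (K : fieldType) (V : vectType K) (B : V -> V -> K).
Hypotheses (B_linl : forall a x y z, B (a *: x + y) z = a * B x z + B y z)
           (B_linr : forall a x y z, B x (a *: y + z) = a * B x y + B x z)
           (B_nondeg : forall u, (forall v, B u v = 0) -> u = 0).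

Lemma nondeg_form_represents (phi : V -> K) :
  (forall a x y, phi (a *: x + y) = a * phi x + phi y) ->
  exists c, forall v, phi v = B c v.
Proof.
move=> phi_lin.
pose Bc c : 'Hom(V, K^o) := linfun (B c : V -> K^o).
have BcE c : Bc c =1 B c := @linfun_lin K V K^o (B c) (B_linr^~ c).
pose Phi : 'Hom(V, 'Hom(V, K^o)) := linfun Bc.
have PhiE : Phi =1 Bc.
  apply: linfun_lin => a x y; apply/lfunP => v.
  by rewrite add_lfunE scale_lfunE /= !BcE B_linl.
have Phi_inj : lker Phi == 0%VS.
  rewrite -subv0; apply/subvP => c; rewrite memv_ker memv0 => /eqP Phi_c0.
  apply/eqP/B_nondeg => v.
  by rewrite -BcE -PhiE Phi_c0 zero_lfunE.
have Phi_onto : limg Phi = fullv.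
  apply/eqP; rewrite eqEdim subvf limg_dim_eq; last by rewrite (eqP Phi_inj) capv0.
  by rewrite !dimvf /= /dim /= muln1.
have : linfun (phi : V -> K^o) \in limg Phi by rewrite Phi_onto memvf.
case/memv_imgP => c _ phi_eq; exists c => v.
by rewrite -BcE -PhiE -phi_eq linfun_lin.
Qed.

End Riesz.

Section CocycleRadical.
Variables (R : realType) (V : vectType R) (br : V -> V -> V).

Section BilinearForm.
Variables (th : V -> V -> R) (th_bil : bilinear_form th).

Lemma formZl a u v : th (a *: u) v = a * th u v.
Proof. exact: (@linZ _ _ R^o (th^~ v) (fun a x y => th_bil.1 a x y v)). Qed.

Lemma formZr a u v : th u (a *: v) = a * th u v.
Proof. exact: (@linZ _ _ R^o (th u) (th_bil.2 ^~ u)). Qed.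

Lemma form0l v : th 0 v = 0.
Proof. by rewrite -(scale0r 0) formZl mul0r. Qed.

End BilinearForm.

Definition cocycle_radical (z : V) :=
  forall th, bilinear_form th -> skew_form th -> cocycle2 br th ->
  forall v, th z v = 0.

Lemma not_k_symplectic_of_cocycle_radical z k :
  z != 0 -> cocycle_radical z -> ~ k_symplectic br k.
Proof.
move=> /eqP z_neq0 z_rad [n [_ [_ [h [th [_ th_form th_kerI th_coc _]]]]]].
apply: z_neq0; apply: th_kerI => i v.
by case: (th_form i) => th_bil th_skew; exact: z_rad th_bil th_skew (th_coc i) v.
Qed.

Lemma H2_trivial_cocycle_radical z :
  H2_trivial br -> central br z -> cocycle_radical z.
Proof.
move=> H2 z_central th th_bil th_skew th_coc v.
have [f [f_lin ->]] := H2 th th_bil th_skew th_coc.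
by rewrite z_central (@lin0 _ _ R^o f f_lin) oppr0.
Qed.

End CocycleRadical.

Section QuadraticLie.
Variables (R : realType) (V : vectType R) (br : V -> V -> V) (B : V -> V -> R).
Hypothesis HQ : quadratic br B.

Let br_linl w a x y : br (a *: x + y) w = a *: br x w + br y w.
Proof. by case: HQ => [[[br_l _] _ _] _ _ _ _]; exact: br_l. Qed.

Let br_linr w a x y : br w (a *: x + y) = a *: br w x + br w y.
Proof. by case: HQ => [[[_ br_r] _ _] _ _ _ _]; exact: br_r. Qed.

Let B_bil : bilinear_form B. Proof. by case: HQ. Qed.
Let B_sym u v : B u v = B v u. Proof. by case: HQ. Qed.
Let B_nondeg u : (forall v, B u v = 0) -> u = 0. Proof. by case: HQ => _ _ _ /(_ u). Qed.
Let B_invariant u v w : B (br u v) w + B (br u w) v = 0. Proof. by case: HQ. Qed.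

Lemma br_anticomm x y : br x y = - br y x.
Proof.
have br_alt w : br w w = 0 by case: HQ => [[_ /(_ w) ->]].
apply/eqP; rewrite -addr_eq0 -[X in _ == X](br_alt (x + y)).
by rewrite (linD (br_linl _)) !(linD (br_linr _)) !br_alt add0r addr0.
Qed.

Lemma central_of_orthogonal_brackets c :
  (forall u v, B c (br u v) = 0) -> central br c.
Proof.
move=> c_orth u; rewrite br_anticomm; apply/eqP; rewrite oppr_eq0; apply/eqP.
apply: B_nondeg => v.
by have := B_invariant u c v; rewrite [B (br u v) c]B_sym c_orth addr0.
Qed.

Lemma derivation_central D z :
  derivation br D -> central br z -> central br (D z).
Proof.
move=> [D_lin D_br] z_central v.
by have := D_br z v; rewrite !z_central (lin0 D_lin) addr0.
Qed.

Section OneDimensionalCenter.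
Variable z0 : V.
Hypotheses (z0_neq0 : z0 != 0)
           (center_span : forall u, central br u <-> exists a : R, u = a *: z0)
           (B_nondeg_center : nondeg_on_center br B).

Lemma central_z0 : central br z0.
Proof. by apply/center_span; exists 1; rewrite scale1r. Qed.

Lemma B_z0z0_neq0 : B z0 z0 != 0.
Proof.
apply: contra z0_neq0 => /eqP B_z0z0; apply/eqP/B_nondeg_center; first exact: central_z0.
by move=> v /center_span [a ->]; rewrite (formZr B_bil) B_z0z0 mulr0.
Qed.

Lemma central_eq0 c : central br c -> B c z0 = 0 -> c = 0.
Proof.
case/center_span => a ->; rewrite (formZl B_bil) => /eqP.
by rewrite mulf_eq0 (negbTE B_z0z0_neq0) orbF => /eqP ->; rewrite scale0r.
Qed.

Lemma skew_derivation_center D :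
  derivation br D -> skew_wrt B D -> forall z, central br z -> D z = 0.
Proof.
move=> D_der D_skew z /center_span [a ->].
have D_z0 : D z0 = 0.
  apply: central_eq0; first exact: derivation_central D_der central_z0.
  apply: self_opp_eq0; apply/eqP; rewrite -addr_eq0 [X in _ + X]B_sym.
  exact/eqP/D_skew.
by rewrite (linZ D_der.1) D_z0 scaler0.
Qed.

Lemma cocycle_radical_z0 : cocycle_radical br z0.
Proof.
move=> th th_bil th_skew th_coc v.
have [c th_z0E] := nondeg_form_represents B_bil.1 B_bil.2 B_nondeg (th_bil.2 ^~ z0).
suff c0 : c = 0 by rewrite th_z0E c0 (form0l B_bil).
apply: central_eq0; last by rewrite -th_z0E; apply/self_opp_eq0/th_skew.
apply: central_of_orthogonal_brackets => u w; rewrite -th_z0E th_skew.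
have := th_coc u w z0; rewrite [br w z0]br_anticomm !central_z0 oppr0 !(form0l th_bil).
by rewrite !addr0 => ->; rewrite oppr0.
Qed.

End OneDimensionalCenter.

End QuadraticLie.

Theorem mainTheorem2 (R : realType) (V : vectType R) (br : V -> V -> V)
    (B : V -> V -> R) (HQ : quadratic br B) :
  (H2_trivial br -> (exists z : V, central br z /\ z != 0) ->
     forall k : nat, (0 < k)%N -> ~ k_symplectic br k) /\
  (center_dim1 br -> nondeg_on_center br B ->
     (forall D : V -> V, derivation br D -> skew_wrt B D ->
        forall z : V, central br z -> D z = 0) /\
     (forall k : nat, (0 < k)%N -> ~ k_symplectic br k)).
Proof.
split=> [H2 [z [z_central z_neq0]] k _ | [z0 [z0_neq0 center_span]] B_nondeg_center].
  exact: not_k_symplectic_of_cocycle_radical z_neq0 (H2_trivial_cocycle_radical H2 z_central).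
split=> [D|k _].
  apply: (skew_derivation_center HQ z0_neq0 center_span B_nondeg_center).
apply: (not_k_symplectic_of_cocycle_radical z0_neq0).
exact: (cocycle_radical_z0 HQ z0_neq0 center_span B_nondeg_center).
Qed.
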